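(* Suppose route sets $\mathbf R_s\in\mathcal R([e,\ell];\theta_s)$ and arrival-time vectors $\bm a_s\in\mathcal X(\mathbf R_s,[e,\ell];\theta_s)$, $s\in\mathcal S$, satisfy: (i) for every $i\in V_{\mathrm{cont}}$ and every $\beta\in\mathbb R$: either $a_{si}\le \beta+w_i/2$ for all $s$, or $a_{si}\ge \beta-w_i/2$ for all $s$; and (ii) for every $i\in V_{\mathrm{disc}}$ and every $b\in\{1,\dots,N_i-1\}$: either $a_{si}\le \bar y_{ib}$ for all $s$, or $a_{si}\ge \underline y_{i,b+1}$ for all $s$. Define $\tau^\star$ by: for $i\in V_{\mathrm{cont}}$, $\tau^\star_i=[y_i,y_i+w_i]$ with $y_i=\min\{\ell_i-w_i,\ \min_{s\in\mathcal S}a_{si}\}$; for $i\in V_{\mathrm{disc}}$, $\tau^\star_i=[\underline y_{ib_i},\bar y_{ib_i}]$ where $b_i$ is an index minimizing $\bar y_{ib}$ over $\{b\in\{1,\dots,N_i\}:\bar y_{ib}\ge\max_{s\in\mathcal S}a_{si}\}$. Then $\tau^\star_i\in TW_i$ for all $i\in V_C$, $\bm a_s\in\mathcal X(\mathbf R_s,\tau^\star;\theta_s)$ for all $s$, and $(\tau^\star,\{\mathbf R_s\}_{s\in\mathcal S})$ is a feasible TWAVRP solution.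
   Context: Let $G=(V,A)$ be a directed graph with $V=\{0,1,\dots,n\}$; node $0$ is the depot and $V_C=V\setminus\{0\}$ is the set of customers. The depot has operating window $[e_0,\ell_0]$, vehicles have capacity $Q$, and each customer $i\in V_C$ has an exogenous time window $[e_i,\ell_i]$. A vector of operational parameters $\theta$ consists of arc costs $c_{ij}\ge 0$ and arc travel times $t_{ij}\ge0$ for $(i,j)\in A$, and demands $q_i\ge 0$ and service times $u_i\ge 0$ for $i\in V_C$. The customer set is partitioned as $V_C=V_{\mathrm{cont}}\cup V_{\mathrm{disc}}$ (disjoint). For $i\in V_{\mathrm{cont}}$ a width $w_i\ge0$ with $e_i\le \ell_i-w_i$ is given and $TW_i=\{[y,y+w_i]: e_i\le y\le \ell_i-w_i\}$. For $i\in V_{\mathrm{disc}}$, $TW_i=\{[\underline y_{i1},\bar y_{i1}],\dots,[\underline y_{iN_i},\bar y_{iN_i}]\}$ is a finite set of intervals with $\underline y_{ib}\le\bar y_{ib}$, none contained in another, ordered so that $e_i=\underline y_{i1}<\dots<\underline y_{iN_i}$ and $\bar y_{i1}<\dots<\bar y_{iN_i}=\ell_i$. A route set $\mathbf R=(R_1,\dots,R_m)$ is a collection of pairwise disjoint nonempty sequences $R_k=(R_{k,1},\dots,R_{k,n_k})$ of distinct customers (every customer with positive demand appearing in exactly one sequence). For a vector $\tau=(\tau_1,\dots,\tau_n)$ of closed intervals, $\mathcal X(\mathbf R,\tau;\theta)$ is the set of $\bm a\in\mathbb R^n_{\ge0}$ with: $a_{R_{k,1}}\ge e_0+t_{0,R_{k,1}}$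 for all $k$; $a_{R_{k,l+1}}-a_{R_{k,l}}\ge t_{R_{k,l},R_{k,l+1}}+u_{R_{k,l}}$ for all $k$ and $1\le l\le n_k-1$; $a_{R_{k,n_k}}\le \ell_0-t_{R_{k,n_k},0}-u_{R_{k,n_k}}$ for all $k$; and $a_i\in\tau_i$ for all $i\in V_C$. We write $\mathbf R\in\mathcal R(\tau;\theta)$ if $\sum_{i\in R_k}q_i\le Q$ for every $k$ and $\mathcal X(\mathbf R,\tau;\theta)\neq\emptyset$. Finitely many scenarios $\theta_1,\dots,\theta_S$ are given, $\mathcal S=\{1,\dots,S\}$. A feasible TWAVRP solution is a pair $(\tau,\{\mathbf R_s\}_{s\in\mathcal S})$ with $\tau_i\in TW_i$ for all $i\in V_C$ and $\mathbf R_s\in\mathcal R(\tau;\theta_s)$ for all $s$. $[e,\ell]$ denotes the vector $([e_1,\ell_1],\dots,[e_n,\ell_n])$, and $a_{si}$ denotes the $i$-th component of $\bm a_s$. *)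

From Stdlib Require Export Reals Lra Lia List.
Export ListNotations.
Open Scope R_scope.

(* Operational parameters theta: arc costs c, travel times t (indexed by
   nodes 0..n, node 0 = depot), demands q and service times u (customers). *)
Record params := mkParams {
  c : nat -> nat -> R;
  t : nat -> nat -> R;
  q : nat -> R;
  u : nat -> R
}.

Definition interval := (R * R)%type.
Definition in_interval (x : R) (I : interval) : Prop := fst I <= x <= snd I.

Definition is_customer (n i : nat) : Prop := (1 <= i <= n)%nat.

Definition route_set (n : nat) (th : params) (Rs : list (list nat)) : Prop :=
  Forall (fun r => r <> nil) Rs /\
  NoDup (concat Rs) /\
  (forall i, In i (concat Rs) -> is_customer n i) /\
  (forall i, is_customer n i -> q th i > 0 -> In i (concat Rs)).

Definition route_load (th : params) (r : list nat) : R :=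
  fold_right Rplus 0 (map (q th) r).

Definition in_X (n : nat) (e l : nat -> R) (Rs : list (list nat))
    (tau : nat -> interval) (th : params) (a : nat -> R) : Prop :=
  (forall i, is_customer n i -> 0 <= a i) /\
  (forall r, In r Rs ->
     a (nth 0 r 0%nat) >= e 0%nat + t th 0%nat (nth 0 r 0%nat)) /\
  (forall r, In r Rs -> forall k, (S k < length r)%nat ->
     a (nth (S k) r 0%nat) - a (nth k r 0%nat)
       >= t th (nth k r 0%nat) (nth (S k) r 0%nat) + u th (nth k r 0%nat)) /\
  (forall r, In r Rs ->
     let last := nth (length r - 1) r 0%nat in
     a last <= l 0%nat - t th last 0%nat - u th last) /\
  (forall i, is_customer n i -> in_interval (a i) (tau i)).

Definition feasible_routes (n : nat) (e l : nat -> R) (Qcap : R)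
    (Rs : list (list nat)) (tau : nat -> interval) (th : params) : Prop :=
  route_set n th Rs /\
  (forall r, In r Rs -> route_load th r <= Qcap) /\
  (exists a : nat -> R, in_X n e l Rs tau th a).

(* Time window sets TW_i. isCont i = true iff i in V_cont. Discrete windows
   are [ylo i b, yhi i b], b = 1..N i. *)
Definition in_TW (e l : nat -> R) (isCont : nat -> bool) (w : nat -> R)
    (N : nat -> nat) (ylo yhi : nat -> nat -> R) (i : nat) (I : interval) : Prop :=
  if isCont i then
    exists y, e i <= y <= l i - w i /\ I = (y, y + w i)
  else
    exists b, (1 <= b <= N i)%nat /\ I = (ylo i b, yhi i b).

(* Feasible TWAVRP solution (tau, {R_s}); scenarios indexed s = 0..S-1. *)
Definition feasible_solution (n : nat) (e l : nat -> R) (Qcap : R)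
    (isCont : nat -> bool) (w : nat -> R) (N : nat -> nat)
    (ylo yhi : nat -> nat -> R) (S : nat) (theta : nat -> params)
    (tau : nat -> interval) (Rs : nat -> list (list nat)) : Prop :=
  (forall i, is_customer n i -> in_TW e l isCont w N ylo yhi i (tau i)) /\
  (forall s, (s < S)%nat -> feasible_routes n e l Qcap (Rs s) tau (theta s)).

Fixpoint min_upto (f : nat -> R) (k : nat) : R :=
  match k with 0%nat => f 0%nat | S k' => Rmin (min_upto f k') (f k) end.
Fixpoint max_upto (f : nat -> R) (k : nat) : R :=
  match k with 0%nat => f 0%nat | S k' => Rmax (max_upto f k') (f k) end.

(* tau^star, given the scenario arrival times a and a choice bsel of b_i *)
Definition tau_star (l : nat -> R) (isCont : nat -> bool) (w : nat -> R)
    (ylo yhi : nat -> nat -> R) (S : nat) (a : nat -> nat -> R)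
    (bsel : nat -> nat) (i : nat) : interval :=
  if isCont i then
    let y := Rmin (l i - w i) (min_upto (fun s => a s i) (S - 1)) in (y, y + w i)
  else (ylo i (bsel i), yhi i (bsel i)).

(* Every arrival time lies in [e_i, l_i], so only the lower end of tau*_i needs
   an argument.  For a continuous customer, condition (i) with beta the
   midpoint of min_s a_si and a_si shows that all arrival times spread over at
   most w_i, so they fit in [y_i, y_i + w_i].  For a discrete customer, if some
   a_si fell below the lower end of the chosen window b_i > 1, condition (ii)
   at b_i - 1 would put all arrival times below yhi_(b_i - 1) < yhi_(b_i),
   contradicting the minimality of b_i. *)

Lemma min_upto_le (f : nat -> R) (k s : nat) :
  (s <= k)%nat -> min_upto f k <= f s.
Proof.
  induction k as [|k IHk]; intros Hs; simpl.
  - replace s with 0%nat by lia; lra.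
  - destruct (Nat.eq_dec s (Datatypes.S k)) as [->|Hne].
    + apply Rmin_r.
    + eapply Rle_trans; [apply Rmin_l | apply IHk; lia].
Qed.

Lemma min_upto_glb (f : nat -> R) (k : nat) (m : R) :
  (forall s, (s <= k)%nat -> m <= f s) -> m <= min_upto f k.
Proof.
  induction k as [|k IHk]; intros Hm; simpl.
  - apply Hm; lia.
  - apply Rmin_glb; [apply IHk; intros; apply Hm; lia | apply Hm; lia].
Qed.

Lemma max_upto_ge (f : nat -> R) (k s : nat) :
  (s <= k)%nat -> f s <= max_upto f k.
Proof.
  induction k as [|k IHk]; intros Hs; simpl.
  - replace s with 0%nat by lia; lra.
  - destruct (Nat.eq_dec s (Datatypes.S k)) as [->|Hne].
    + apply Rmax_r.
    + eapply Rle_trans; [apply IHk; lia | apply Rmax_l].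
Qed.

Lemma max_upto_lub (f : nat -> R) (k : nat) (m : R) :
  (forall s, (s <= k)%nat -> f s <= m) -> max_upto f k <= m.
Proof.
  induction k as [|k IHk]; intros Hm; simpl.
  - apply Hm; lia.
  - apply Rmax_lub; [apply IHk; intros; apply Hm; lia | apply Hm; lia].
Qed.

Lemma spread_le_of_split (S : nat) (x : nat -> R) (w : R) :
  (forall beta,
     (forall s, (s < S)%nat -> x s <= beta + w / 2) \/
     (forall s, (s < S)%nat -> x s >= beta - w / 2)) ->
  forall s, (s < S)%nat -> x s - min_upto x (S - 1) <= w.
Proof.
  intros Hsplit s Hs.
  set (m := min_upto x (S - 1)).
  destruct (Hsplit ((m + x s) / 2)) as [Hbelow | Habove].
  - specialize (Hbelow s Hs); lra.
  - assert ((m + x s) / 2 - w / 2 <= m).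
    { apply min_upto_glb; intros s' Hs'.
      specialize (Habove s' ltac:(lia)); lra. }
    lra.
Qed.

Lemma cont_window_mem (S : nat) (x : nat -> R) (l w : R) :
  (forall s, (s < S)%nat -> x s <= l) ->
  (forall beta,
     (forall s, (s < S)%nat -> x s <= beta + w / 2) \/
     (forall s, (s < S)%nat -> x s >= beta - w / 2)) ->
  forall s, (s < S)%nat ->
  let y := Rmin (l - w) (min_upto x (S - 1)) in y <= x s <= y + w.
Proof.
  intros Hl Hsplit s Hs y.
  assert (Hmin : min_upto x (S - 1) <= x s) by (apply min_upto_le; lia).
  assert (Hspread := spread_le_of_split S x w Hsplit s Hs).
  specialize (Hl s Hs).
  unfold y, Rmin; destruct (Rle_dec (l - w) (min_upto x (S - 1))); lra.
Qed.

Lemma disc_window_mem (S N b : nat) (x : nat -> R) (e : R) (ylo yhi : nat -> R) :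
  (forall s, (s < S)%nat -> e <= x s) ->
  e = ylo 1%nat ->
  (forall b', (1 <= b')%nat -> (b' < b)%nat -> yhi b' < yhi b) ->
  (forall b', (1 <= b' <= N - 1)%nat ->
     (forall s, (s < S)%nat -> x s <= yhi b') \/
     (forall s, (s < S)%nat -> x s >= ylo (b' + 1)%nat)) ->
  (1 <= b <= N)%nat ->
  yhi b >= max_upto x (S - 1) ->
  (forall b', (1 <= b' <= N)%nat -> yhi b' >= max_upto x (S - 1) -> yhi b <= yhi b') ->
  forall s, (s < S)%nat -> ylo b <= x s <= yhi b.
Proof.
  intros He He1 Hmono Hsplit Hb Hcover Hminimal s Hs.
  assert (Hmax : x s <= max_upto x (S - 1)) by (apply max_upto_ge; lia).
  split; [|lra].
  destruct (Nat.eq_dec b 1) as [->|Hb1].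
  - rewrite <- He1; apply He, Hs.
  - destruct (Hsplit (b - 1)%nat ltac:(lia)) as [Hbelow | Habove].
    + exfalso.
      assert (max_upto x (S - 1) <= yhi (b - 1)%nat)
        by (apply max_upto_lub; intros s' Hs'; apply Hbelow; lia).
      assert (yhi b <= yhi (b - 1)%nat) by (apply Hminimal; [lia | lra]).
      assert (yhi (b - 1)%nat < yhi b) by (apply Hmono; lia).
      lra.
    + specialize (Habove s Hs).
      replace (b - 1 + 1)%nat with b in Habove by lia; lra.
Qed.

Lemma in_X_change_windows (n : nat) (e l : nat -> R) (Rs : list (list nat))
    (tau tau' : nat -> interval) (th : params) (a : nat -> R) :
  in_X n e l Rs tau th a ->
  (forall i, is_customer n i -> in_interval (a i) (tau' i)) ->
  in_X n e l Rs tau' th a.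
Proof.
  intros (Hnonneg & Hdepart & Hsucc & Hreturn & _) Hwin.
  exact (conj Hnonneg (conj Hdepart (conj Hsucc (conj Hreturn Hwin)))).
Qed.

Lemma feasible_routes_of_in_X (n : nat) (e l : nat -> R) (Qcap : R)
    (Rs : list (list nat)) (tau tau' : nat -> interval) (th : params) (a : nat -> R) :
  feasible_routes n e l Qcap Rs tau th ->
  in_X n e l Rs tau' th a ->
  feasible_routes n e l Qcap Rs tau' th.
Proof.
  intros (Hroutes & Hload & _) Ha.
  split; [exact Hroutes | split; [exact Hload | exists a; exact Ha]].
Qed.

Theorem mainTheorem2
  (n : nat) (e l : nat -> R) (Qcap : R)
  (isCont : nat -> bool) (w : nat -> R)
  (N : nat -> nat) (ylo yhi : nat -> nat -> R)
  (S : nat) (theta : nat -> params)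
  (* standing assumptions *)
  (HS : (1 <= S)%nat)
  (Htheta : forall s, (s < S)%nat ->
     (forall i j, 0 <= c (theta s) i j) /\ (forall i j, 0 <= t (theta s) i j) /\
     (forall i, is_customer n i -> 0 <= q (theta s) i /\ 0 <= u (theta s) i))
  (Hcont : forall i, is_customer n i -> isCont i = true ->
     0 <= w i /\ e i <= l i - w i)
  (Hdisc : forall i, is_customer n i -> isCont i = false ->
     (1 <= N i)%nat /\
     (forall b, (1 <= b <= N i)%nat -> ylo i b <= yhi i b) /\
     (forall b b', (1 <= b <= N i)%nat -> (1 <= b' <= N i)%nat -> b <> b' ->
        ~ (ylo i b' <= ylo i b /\ yhi i b <= yhi i b')) /\
     (forall b b', (1 <= b)%nat -> (b < b')%nat -> (b' <= N i)%nat ->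
        ylo i b < ylo i b' /\ yhi i b < yhi i b') /\
     e i = ylo i 1%nat /\ yhi i (N i) = l i)
  (* route sets and arrival times *)
  (Rs : nat -> list (list nat)) (a : nat -> nat -> R)
  (HR : forall s, (s < S)%nat ->
     feasible_routes n e l Qcap (Rs s) (fun i => (e i, l i)) (theta s))
  (Ha : forall s, (s < S)%nat ->
     in_X n e l (Rs s) (fun i => (e i, l i)) (theta s) (a s))
  (* condition (i) *)
  (Hi : forall i, is_customer n i -> isCont i = true -> forall beta : R,
     (forall s, (s < S)%nat -> a s i <= beta + w i / 2) \/
     (forall s, (s < S)%nat -> a s i >= beta - w i / 2))
  (* condition (ii) *)
  (Hii : forall i, is_customer n i -> isCont i = false ->
     forall b, (1 <= b <= N i - 1)%nat ->
     (forall s, (s < S)%nat -> a s i <= yhi i b) \/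
     (forall s, (s < S)%nat -> a s i >= ylo i (b + 1)%nat))
  (* b_i: any index minimizing yhi i b over {b | yhi i b >= max_s a s i} *)
  (bsel : nat -> nat)
  (Hbsel : forall i, is_customer n i -> isCont i = false ->
     (1 <= bsel i <= N i)%nat /\
     yhi i (bsel i) >= max_upto (fun s => a s i) (S - 1) /\
     (forall b, (1 <= b <= N i)%nat ->
        yhi i b >= max_upto (fun s => a s i) (S - 1) ->
        yhi i (bsel i) <= yhi i b)) :
  let tau := tau_star l isCont w ylo yhi S a bsel in
  (forall i, is_customer n i -> in_TW e l isCont w N ylo yhi i (tau i)) /\
  (forall s, (s < S)%nat -> in_X n e l (Rs s) tau (theta s) (a s)) /\
  feasible_solution n e l Qcap isCont w N ylo yhi S theta tau Rs.
Proof.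
  intros tau.
  assert (Hbnd : forall s i, (s < S)%nat -> is_customer n i -> e i <= a s i <= l i)
    by (intros s i Hs Hc; apply (Ha s Hs), Hc).
  assert (HTW : forall i, is_customer n i -> in_TW e l isCont w N ylo yhi i (tau i)).
  { intros i Hc; unfold in_TW, tau, tau_star.
    destruct (isCont i) eqn:Ec.
    - destruct (Hcont i Hc Ec) as [_ Hel].
      eexists; split; [split; [apply Rmin_glb | apply Rmin_l] | reflexivity]; [lra |].
      apply min_upto_glb; intros s Hs; apply (Hbnd s i); [lia | exact Hc].
    - exists (bsel i); split; [apply (Hbsel i Hc Ec) | reflexivity]. }
  assert (Hwin : forall s i, (s < S)%nat -> is_customer n i -> in_interval (a s i) (tau i)).
  { intros s i Hs Hc; unfold in_interval, tau, tau_star.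
    destruct (isCont i) eqn:Ec; simpl.
    - apply (cont_window_mem S (fun s => a s i)); [intros; apply Hbnd | apply Hi | ]; auto.
    - destruct (Hdisc i Hc Ec) as (_ & _ & _ & Hmono & He1 & _).
      destruct (Hbsel i Hc Ec) as (Hb & Hcover & Hminimal).
      apply (disc_window_mem S (N i) (bsel i) (fun s => a s i) (e i));
        [intros; apply Hbnd | | intros; apply Hmono | apply Hii | | | | ]; auto; lia. }
  assert (HX : forall s, (s < S)%nat -> in_X n e l (Rs s) tau (theta s) (a s))
    by (intros s Hs; apply (in_X_change_windows _ _ _ _ _ _ _ _ (Ha s Hs)); auto).
  split; [exact HTW | split; [exact HX | split; [exact HTW |]]].
  intros s Hs; exact (feasible_routes_of_in_X _ _ _ _ _ _ _ _ _ (HR s Hs) (HX s Hs)).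
Qed.
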